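(* Let $M$ be any matroid that is representable over $\mathbb{Q}$. Then there exists an integer $N\ge 1$ such that $M$ is isomorphic to a minor of the matroid $M(\mathcal{A}_N)$ underlying the resonance arrangement $\mathcal{A}_N$. Equivalently, every hyperplane arrangement $\mathcal{B}$ defined over $\mathbb{Q}$ arises (up to isomorphism of the underlying matroids) from $\mathcal{A}_N$, for some large enough $N$, by a finite sequence of restriction and contraction steps.
   Context: For $n\ge1$, the resonance arrangement $\mathcal{A}_n$ is the arrangement in $\mathbb{R}^n$ (or $\mathbb{Q}^n$) consisting of the hyperplanes $H_I=\{x:\sum_{i\in I}x_i=0\}$ for all nonempty $I\subseteq[n]$; equivalently its normal vectors are all nonzero $0/1$-vectors $\chi_I$ in $\mathbb{R}^n$. The matroid $M(\mathcal{A}_n)$ has ground set $\mathcal{A}_n$ and a subset is independent iff the corresponding normal vectors $\chi_I$ are linearly independent. A matroid is representable over $\mathbb{Q}$ if it equals the matroid of linearly independent column subsets of some matrix over $\mathbb{Q}$; a matroid of an arrangement is the matroid of its normal vectors. For a matroid $M=(E,\mathcal{I})$ and $S\subseteq E$: the restriction $M|S$ has ground set $S$ and independent sets $\{I\in\mathcal{I}: I\subseteq S\}$; if $S$ is independent, the contraction $M/S$ has ground set $E\setminus S$ and independent sets $\{I\subseteq E\setminus S: I\cup S\in\mathcal{I}\}$. A minor of $M$ is any matroid obtained from $M$ by a finite sequence of restrictions and contractions. *)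

From HB Require Import structures.
From mathcomp Require Import all_boot all_order all_algebra.
Set Implicit Arguments. Unset Strict Implicit. Unset Printing Implicit Defensive.
Import GRing.Theory.
Local Open Scope ring_scope.

Record mat (E : finType) := Mat { gnd : {set E}; ind : {set E} -> Prop }.

(* Linear independence over Q of the family (v e)_{e in S} (as a family:
   a repeated vector makes the family dependent), via MathComp's [free]. *)
Definition lin_indep (E : finType) (r : nat) (v : E -> 'rV[rat]_r)
  (S : {set E}) : Prop := free [seq v e | e <- enum S].

Definition vec_matroid (E : finType) (r : nat) (v : E -> 'rV[rat]_r) : mat E :=
  Mat setT (lin_indep v).

Definition representable_Q (E : finType) (M : mat E) : Prop :=
  exists (r : nat) (v : E -> 'rV[rat]_r),
    gnd M = setT /\ forall S : {set E}, ind M S <-> lin_indep v S.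

Definition restr (E : finType) (M : mat E) (S : {set E}) : mat E :=
  Mat S (fun I => I \subset S /\ ind M I).

(* Contraction M/S (used only for independent S). *)
Definition contr (E : finType) (M : mat E) (S : {set E}) : mat E :=
  Mat (gnd M :\: S) (fun I => I \subset gnd M :\: S /\ ind M (I :|: S)).

Inductive minor_of (E : finType) (M : mat E) : mat E -> Prop :=
| minor_refl : minor_of M M
| minor_restr (N : mat E) (S : {set E}) : minor_of M N -> S \subset gnd N -> minor_of M (restr N S)
| minor_contr (N : mat E) (S : {set E}) : minor_of M N -> S \subset gnd N -> ind N S ->
    minor_of M (contr N S).

Definition mat_iso (E1 E2 : finType) (M1 : mat E1) (M2 : mat E2) : Prop :=
  exists f : E1 -> E2,
    {in gnd M1 &, injective f} /\ f @: gnd M1 = gnd M2 /\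
    forall S : {set E1}, S \subset gnd M1 -> (ind M1 S <-> ind M2 (f @: S)).

Definition res_ground (n : nat) : finType := {I : {set 'I_n} | I != set0}.

(* Normal vector chi_I of the hyperplane H_I. *)
Definition chi (n : nat) (I : res_ground n) : 'rV[rat]_n :=
  \row_(i < n) (i \in val I)%:R.

Definition resonance_matroid (n : nat) : mat (res_ground n) :=
  vec_matroid (@chi n).

From mathcomp Require Import all_boot all_order all_algebra.
Set Implicit Arguments. Unset Strict Implicit. Unset Printing Implicit Defensive.
Import GRing.Theory Num.Theory.
Local Open Scope ring_scope.

(* Let M be represented by v e in Q^r.  Clearing denominators, D * v e =
   w+ e - w- e with nonnegative integer vectors bounded by L.  The
   coordinates of A_N are "cells": a marker, a label per element, and cells
   (j, k, s) with j < r, k <= L and a sign s.  Element e is lifted to the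
   hyperplane supported on the marker, its label and the cells (j, k, s)
   with k < w_s e j; the projection P : (j, k, s) |-> s e_j maps it to
   D * v e.  The tags (marker and label unit vectors) and the links
   (j, k, s) + (j, 0, -s) form a basis of ker P.  A general contraction
   lemma then says that v restricted to I is free iff the lifts of I plus
   this basis are free: M is M(A_N) contracted by the basis and restricted
   to the lifts. *)

Section SetFamilies.
Variables (K : fieldType) (vT : vectType K) (T : finType) (f : T -> vT)
  (A : {set T}).

Let X := map_tuple f (enum_tuple A).

Lemma family_nth (i : 'I_#|A|) : X`_i = f (enum_val i).
Proof.
rewrite /X /= (nth_map (enum_val i)) ?size_enum ?cardE //=; last by rewrite -cardE.
by rewrite /enum_val; congr f; apply: set_nth_default; rewrite -cardE.
Qed.

Lemma sum_family (c : T -> K) :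
  \sum_(x in A) c x *: f x = \sum_(i < #|A|) c (enum_val i) *: X`_i.
Proof.
rewrite (big_enum_val (fun x => c x *: f x)).
by apply: eq_bigr => i _; rewrite family_nth.
Qed.

Let coef_of (k : 'I_#|A| -> K) (x : T) : K :=
  \sum_(i < #|A| | enum_val i == x) k i.

Let coef_ofE k i : coef_of k (enum_val i) = k i.
Proof.
rewrite /coef_of (bigD1 i) //= big1 ?addr0 // => j /andP[/eqP/enum_val_inj ->].
by rewrite eqxx.
Qed.

Lemma free_setP :
  reflect (forall c : T -> K,
             \sum_(x in A) c x *: f x = 0 -> forall x, x \in A -> c x = 0)
    (free [seq f x | x <- enum A]).
Proof.
apply: (iffP (@freeP K vT #|A| X)) => [freeX c sum0 x xA | free_c k sum0 i].
  have := freeX (fun i => c (enum_val i)); rewrite -sum_family.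
  by move=> /(_ sum0 (enum_rank_in xA x)); rewrite enum_rankK_in.
rewrite -coef_ofE; apply: free_c; last exact: enum_valP.
by rewrite sum_family -[RHS]sum0; apply: eq_bigr => j _; rewrite coef_ofE.
Qed.

Lemma span_setP u : u \in <<[seq f x | x <- enum A]>>%VS ->
  exists c : T -> K, u = \sum_(x in A) c x *: f x.
Proof.
move=> /coord_span ->; exists (coef_of (fun i => coord X i u)).
by rewrite sum_family; apply: eq_bigr => j _; rewrite coef_ofE.
Qed.
End SetFamilies.

(* Let P be a linear map with P(u (f e)) = D * v e
   (D nonzero), whose kernel is spanned by the free family (u s)_{s in S},
   the f e lying outside S.  Then (v e)_{e in I} is free iff
   (u x)_{x in f(I) + S} is free: contracting S and projecting by P
   recovers the configuration v. *)
Section Contraction.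
Variables (K : fieldType) (E R : finType) (n r : nat) (v : E -> 'rV[K]_r)
  (u : R -> 'rV[K]_n) (P : 'M[K]_(n, r)) (S : {set R}) (f : E -> R) (D : K).
Hypotheses (D_neq0 : D != 0) (f_inj : injective f)
  (f_notin_S : forall e, f e \notin S)
  (proj_lift : forall e, u (f e) *m P = D *: v e)
  (proj_S : forall s, s \in S -> u s *m P = 0)
  (ker_in_span : forall y, y *m P = 0 -> y \in <<[seq u s | s <- enum S]>>%VS)
  (free_S : free [seq u s | s <- enum S]).

Lemma sum_lift_S (F : R -> 'rV[K]_n) (I : {set E}) :
  \sum_(x in f @: I :|: S) F x = \sum_(e in I) F (f e) + \sum_(x in S) F x.
Proof.
rewrite -(big_imset F (in2W f_inj)) -bigU /=; last first.
  apply/pred0P => x /=; apply/negbTE/negP => /andP[/imsetP[e _ ->]].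
  by rewrite (negbTE (f_notin_S e)).
by apply: eq_bigl => x; rewrite !inE.
Qed.

Lemma free_lift_of_free (I : {set E}) :
  free [seq v e | e <- enum I] -> free [seq u x | x <- enum (f @: I :|: S)].
Proof.
move=> /free_setP free_I; apply/free_setP => c; rewrite sum_lift_S => sum0.
have coef_I e : e \in I -> c (f e) = 0.
  have sumP0 : \sum_(e in I) (c (f e) * D) *: v e = 0.
    have projS0 : (\sum_(x in S) c x *: u x) *m P = 0.
      by rewrite mulmx_suml big1 // => x xS; rewrite -scalemxAl proj_S ?scaler0.
    have := congr1 (mulmx^~ P) sum0; rewrite mulmxDl mul0mx projS0 addr0 mulmx_suml.
    by move=> sumI0; rewrite -[RHS]sumI0; apply: eq_bigr => e1 _; rewrite -scalemxAl proj_lift scalerA.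
  by move=> eI; have /eqP := free_I _ sumP0 e eI; rewrite mulf_eq0 (negbTE D_neq0) orbF => /eqP.
move: sum0; rewrite big1 ?add0r => [sumS0 x|e eI]; last by rewrite coef_I ?scale0r.
move/free_setP: free_S => coef_S.
by case/setUP => [/imsetP[e eI ->]|xS]; [exact: coef_I | exact: coef_S].
Qed.

Lemma free_of_free_lift (I : {set E}) :
  free [seq u x | x <- enum (f @: I :|: S)] -> free [seq v e | e <- enum I].
Proof.
move=> /free_setP free_lift; apply/free_setP => d sum0 e eI.
pose y := \sum_(e in I) d e *: u (f e).
have /ker_in_span/span_setP[b y_eq] : y *m P = 0.
  rewrite mulmx_suml (eq_bigr (fun e => D *: (d e *: v e))).
    by rewrite -scaler_sumr sum0 scaler0.
  by move=> e' _; rewrite -scalemxAl proj_lift !scalerA mulrC.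
(* The relation y - sum_S b s u s = 0 among the lifted vectors. *)
pose c x := \sum_(e in I | f e == x) d e - (x \in S)%:R * b x.
have c_lift e' : e' \in I -> c (f e') = d e'.
  move=> e'I; rewrite /c (negbTE (f_notin_S e')) mul0r subr0 (bigD1 e') ?e'I ?eqxx //=.
  by rewrite big1 ?addr0 // => e1 /andP[/andP[_ /eqP/f_inj ->]]; rewrite eqxx.
have c_S s : s \in S -> c s = - b s.
  move=> sS; rewrite /c sS mul1r big1 ?sub0r // => e1 /andP[_ /eqP fe1].
  by move: (f_notin_S e1); rewrite fe1 sS.
rewrite -(c_lift e eI); apply: (free_lift c); last by rewrite inE imset_f.
rewrite sum_lift_S (eq_bigr (fun e => d e *: u (f e))) => [|e1 e1I]; last by rewrite c_lift.
rewrite (eq_bigr (fun s => - (b s *: u s))) => [|s sS]; last by rewrite c_S // scaleNr.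
by rewrite sumrN -y_eq subrr.
Qed.

Lemma free_lift (I : {set E}) :
  free [seq v e | e <- enum I] = free [seq u x | x <- enum (f @: I :|: S)].
Proof. by apply/idP/idP; [apply: free_lift_of_free | apply: free_of_free_lift]. Qed.
End Contraction.

Lemma kernel_in_subspace (K : fieldType) (m n : nat) (P : 'M[K]_(m, n))
    (Q : 'M[K]_(n, m)) (W : {vspace 'rV[K]_m}) :
  (forall i, 'e_i + 'e_i *m P *m Q \in W) -> forall y, y *m P = 0 -> y \in W.
Proof.
move=> unitW y yP0.
have : \sum_i y 0 i *: ('e_i + 'e_i *m P *m Q) \in W.
  by apply: memv_suml => i _; apply: memvZ.
under eq_bigr => i _ do rewrite scalerDr !scalemxAl.
by rewrite big_split /= -!mulmx_suml -row_sum_delta yP0 mul0mx addr0.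
Qed.

Lemma private_coordinate (K : fieldType) (R : finType) (n : nat)
    (u : R -> 'rV[K]_n) (S : {set R}) (c : R -> K) (s0 : R) (i : 'I_n) :
  \sum_(s in S) c s *: u s = 0 -> s0 \in S -> u s0 0 i != 0 ->
  (forall s, s \in S -> s != s0 -> u s 0 i != 0 -> c s = 0) -> c s0 = 0.
Proof.
move=> sum0 s0S us0i others.
have := congr1 (fun y : 'rV_n => y 0 i) sum0; rewrite summxE (bigD1 s0) //= big1.
  by rewrite !mxE addr0 => /eqP; rewrite mulf_eq0 (negbTE us0i) orbF => /eqP.
move=> s /andP[sS ss0]; rewrite !mxE; have [->|usi] := eqVneq (u s 0 i) 0.
  by rewrite mulr0.
by rewrite others ?mul0r.
Qed.

Lemma integer_scaling (E : finType) (r : nat) (v : E -> 'rV[rat]_r) :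
  exists (D : rat) (L : nat) (w : bool -> E -> 'I_r -> nat),
    [/\ D != 0, forall e j, (w true e j)%:R - (w false e j)%:R = D * v e 0 j
      & forall s e j, (w s e j <= L)%N].
Proof.
pose den (x : E * 'I_r) : int := denq (v x.1 0 x.2).
pose D : rat := \prod_x (den x)%:~R.
pose z (e : E) (j : 'I_r) : int := numq (v e 0 j) * \prod_(x | x != (e, j)) den x.
have zE e j : (z e j)%:~R = D * v e 0 j.
  by rewrite /D (bigD1 (e, j)) //= intrM rmorph_prod /= numqE -mulrA mulrC.
pose w s e j := if s == (0 <= z e j) then `|z e j|%N else 0%N.
exists D, (\max_(x : E * 'I_r) `|z x.1 x.2|%N), w; split.
- by apply/prodf_neq0 => x _; rewrite intr_eq0 denq_neq0.
- move=> e j; rewrite -zE /w; case: (lerP 0 (z e j)) => [z_ge0|z_lt0] /=.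
    by rewrite subr0 natr_absz ger0_norm.
  by rewrite sub0r natr_absz ltr0_norm // rmorphN opprK.
- move=> s e j; have := @leq_bigmax _ (fun x : E * 'I_r => `|z x.1 x.2|%N) (e, j).
  by rewrite /w; case: ifP => // _ _; apply: leq0n.
Qed.

Lemma sum_ord_lt (K : numDomainType) (L a : nat) : (a <= L)%N ->
  \sum_(k < L) ((k < a)%N)%:R = a%:R :> K.
Proof.
move=> aL; rewrite (eq_bigr (fun k : 'I_L => if (k < a)%N then 1 else 0)).
  by rewrite -big_mkcond /= -(big_ord_widen _ (fun _ => 1)) // sumr_const card_ord.
by move=> k _; case: ifP.
Qed.

Lemma chi_neq0 (n : nat) (I : res_ground n) (i : 'I_n) : (chi I 0 i != 0) = (i \in val I).
Proof. by rewrite mxE pnatr_eq0 eqb0 negbK. Qed.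

Section ResonanceGadget.
Variables (E : finType) (r L : nat).

(* Coordinates of the resonance arrangement: a marker [inl None], a label
   [inl (Some e)] for each element, and unit cells [inr (j, k, s)] carrying
   the sign s in direction j. *)
Definition cell : finType := (option E + ('I_r * 'I_L.+1 * bool))%type.
Local Notation N := #|cell|.

Definition enc (c : cell) : 'I_N := enum_rank c.
Definition dec (i : 'I_N) : cell := enum_val i.
Lemma encK : cancel enc dec. Proof. exact: enum_rankK. Qed.
Lemma decK : cancel dec enc. Proof. exact: enum_valK. Qed.

(* The hyperplane of A_N whose support is the set of cells satisfying p
   (the marker hyperplane if that set is empty). *)
Definition marker_hyp : res_ground N.
Proof. by exists [set enc (inl None)]; apply/set0Pn; exists (enc (inl None)); rewrite set11. Defined.
Definition hyp (p : pred cell) : res_ground N := insubd marker_hyp [set i | p (dec i)].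

Lemma mem_hyp (p : pred cell) c0 i : p c0 -> (i \in val (hyp p)) = p (dec i).
Proof.
move=> pc0; rewrite /hyp insubdK ?inE //.
by apply/set0Pn; exists (enc c0); rewrite inE encK.
Qed.

Definition ind_vec (p : pred cell) : 'rV[rat]_N := \row_i (p (dec i))%:R.

Lemma chi_hyp (p : pred cell) c0 : p c0 -> chi (hyp p) = ind_vec p.
Proof. by move=> pc0; apply/rowP => i; rewrite !mxE (mem_hyp _ pc0). Qed.

Local Notation e_cell c := ('e_(enc c) : 'rV[rat]_N).

Lemma ind_vec1 c : ind_vec (pred1 c) = e_cell c.
Proof. by apply/rowP => i; rewrite !mxE /= (can2_eq decK encK). Qed.

Definition tag (t : option E) : pred cell := pred1 (inl t).
Definition partner (x : 'I_r * 'I_L.+1 * bool) : cell := inr (x.1.1, ord0, ~~ x.2).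
Definition link (x : 'I_r * 'I_L.+1 * bool) : pred cell :=
  fun c => (c == inr x) || (c == partner x).

Definition kernel_basis : {set res_ground N} :=
  [set hyp (tag t) | t : option E] :|: [set hyp (link x) | x : 'I_r * 'I_L.+1 * bool].

Lemma partner_neq x : inr x != partner x.
Proof. by case: x => [[j k] s]; apply/eqP; rewrite /partner /= => -[_]; case: s. Qed.

Lemma chi_tag t : chi (hyp (tag t)) = e_cell (inl t).
Proof. by rewrite -ind_vec1; apply: (chi_hyp (c0 := inl t)); apply: eqxx. Qed.

Lemma chi_link x : chi (hyp (link x)) = e_cell (inr x) + e_cell (partner x).
Proof.
rewrite (chi_hyp (c0 := inr x)) /link ?eqxx //; apply/rowP => i; rewrite !mxE.
rewrite -!(can2_eq decK encK) eqxx /=.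
have [->|] := eqVneq (dec i) (inr x); last by rewrite add0r.
by rewrite (negbTE (partner_neq x)) addr0.
Qed.

Lemma link_flip j s : hyp (link (j, ord0, s)) = hyp (link (j, ord0, ~~ s)).
Proof.
rewrite /hyp; congr insubd; apply/setP => i; rewrite !inE /link /partner /=.
by rewrite negbK orbC.
Qed.

(* Independence of the kernel basis, by private coordinates: a label cell
   lies only in its tag, a cell (j, k, s) with k > 0 only in its link, and
   then (j, 0, s) only in the link of (j, 0, s). *)
Lemma kernel_basis_free : free [seq chi s | s <- enum kernel_basis].
Proof.
apply/free_setP => c sum0.
have zero_at s0 c0 : s0 \in kernel_basis -> enc c0 \in val s0 ->
    (forall s, s \in kernel_basis -> s != s0 -> enc c0 \in val s -> c s = 0) ->
    c s0 = 0.
  move=> s0B c0s0 others; have := private_coordinate (i := enc c0) sum0 s0B.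
  by rewrite chi_neq0 c0s0; apply=> // s sB ss0; rewrite chi_neq0; apply: others.
have tagB t : hyp (tag t) \in kernel_basis by apply/setUP; left; apply/imsetP; exists t.
have linkB x : hyp (link x) \in kernel_basis.
  by apply/setUP; right; apply/imsetP; exists x.
have mem_tag t c0 : (enc c0 \in val (hyp (tag t))) = (c0 == inl t).
  by rewrite (mem_hyp _ (c0 := inl t)) /tag ?encK /=.
have mem_link x c0 : (enc c0 \in val (hyp (link x))) = link x c0.
  by rewrite (mem_hyp _ (c0 := inr x)) ?encK // /link eqxx.
have c_tag t : c (hyp (tag t)) = 0.
  apply: (zero_at _ (inl t) (tagB t)); first by rewrite mem_tag.
  move=> s /setUP[] /imsetP[y _ ->]; last by rewrite mem_link.
  by rewrite mem_tag => neq /eqP[ty]; rewrite ty eqxx in neq.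
have c_link j k s : k != ord0 -> c (hyp (link (j, k, s))) = 0.
  move=> k0; apply: (zero_at _ (inr (j, k, s)) (linkB _)).
    by rewrite mem_link /link eqxx.
  move=> s1 /setUP[] /imsetP[y _ ->]; first by rewrite mem_tag.
  case: y => [[j' k'] s'] neq; rewrite mem_link /link /partner.
  case/orP => /eqP[jj kk ss]; last by rewrite kk eqxx in k0.
  by rewrite jj kk ss eqxx in neq.
move=> s /setUP[] /imsetP[y _ ->]; first exact: c_tag.
case: y => [[j k] s']; have [->|] := eqVneq k ord0; last exact: c_link.
apply: (zero_at _ (inr (j, ord0, s')) (linkB _)); first by rewrite mem_link /link eqxx.
move=> s1 /setUP[] /imsetP[y _ ->]; first by rewrite mem_tag.
case: y => [[j1 k1] s1'] neq; rewrite mem_link /link /partner.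
case/orP => [/eqP[jj kk ss]|/eqP[jj ss]]; first by rewrite jj -kk ss eqxx in neq.
have [k10|] := eqVneq k1 ord0; last exact: c_link.
by rewrite k10 jj ss -link_flip eqxx in neq.
Qed.

Definition sign (s : bool) : rat := if s then 1 else -1.
Definition weight (c : cell) (j : 'I_r) : rat :=
  if c is inr (j', _, s) then (j' == j)%:R * sign s else 0.
Definition proj : 'M[rat]_(N, r) := \matrix_(i, j) weight (dec i) j.
Definition proj_section : 'M[rat]_(r, N) :=
  \matrix_(j < r, i < N) (dec i == inr (j, ord0, false))%:R.

Lemma unit_proj c : e_cell c *m proj = \row_j weight c j.
Proof. by apply/rowP => j; rewrite -rowE !mxE encK. Qed.

Lemma unit_section j : ('e_j : 'rV_r) *m proj_section = e_cell (inr (j, ord0, false)).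
Proof. by apply/rowP => i; rewrite -rowE !mxE (can2_eq decK encK). Qed.

Lemma ind_vec_proj (p : pred cell) j :
  (ind_vec p *m proj) 0 j = \sum_(c : cell) (p c)%:R * weight c j.
Proof.
rewrite !mxE (big_enum_val (fun c => (p c)%:R * weight c j)) /=.
by apply: eq_bigr => i _; rewrite !mxE.
Qed.

Definition kernel_span := <<[seq chi s | s <- enum kernel_basis]>>%VS.

Lemma kernel_basis_span s : s \in kernel_basis -> chi s \in kernel_span.
Proof. by move=> sB; apply/memv_span/map_f; rewrite mem_enum. Qed.

(* Each unit vector is congruent modulo the links and tags to a vector
   factoring through P: the tag of a marker/label cell, the link of
   (j, k, +), and the difference of the links of (j, k, -) and (j, 0, +). *)
Lemma unit_correction c : e_cell c + e_cell c *m proj *m proj_section \in kernel_span.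
Proof.
have tagW t : e_cell (inl t) \in kernel_span.
  by rewrite -chi_tag kernel_basis_span //; apply/setUP; left; apply/imsetP; exists t.
have linkW x : e_cell (inr x) + e_cell (partner x) \in kernel_span.
  by rewrite -chi_link kernel_basis_span //; apply/setUP; right; apply/imsetP; exists x.
rewrite unit_proj; case: c => [t|[[j k] s]].
  have -> : \row_j weight (inl t) j = 0 by apply/rowP => j; rewrite !mxE.
  by rewrite mul0mx addr0.
have -> : \row_j' weight (inr (j, k, s)) j' = sign s *: 'e_j.
  by apply/rowP => j'; rewrite !mxE eq_sym mulrC.
rewrite -scalemxAl unit_section; case: s; rewrite /sign ?scale1r; first exact: linkW.
have := memvB (linkW (j, k, false)) (linkW (j, ord0, true)).
by rewrite /partner /= opprD addrA addrK scaleN1r.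
Qed.

Lemma ker_proj_in_span y : y *m proj = 0 -> y \in kernel_span.
Proof.
apply: (kernel_in_subspace (Q := proj_section)) => i.
by rewrite -[i]decK unit_correction.
Qed.

Lemma kernel_basis_proj s : s \in kernel_basis -> chi s *m proj = 0.
Proof.
case/setUP => /imsetP[y _ ->]; first by rewrite chi_tag unit_proj; apply/rowP => j; rewrite !mxE.
rewrite chi_link mulmxDl !unit_proj; apply/rowP => j; rewrite !mxE.
by case: y => [[j' k] []]; rewrite /sign /= ?mulrN1 ?mulr1 ?subrr ?addrN ?addNr.
Qed.

Variable w : bool -> E -> 'I_r -> nat.
Hypothesis w_le : forall s e j, (w s e j <= L)%N.

Definition lift_cells (e : E) : pred cell := fun c =>
  match c with
  | inl None => true
  | inl (Some e') => e' == e
  | inr (j, k, s) => (k < w s e j)%N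
  end.
Definition lifted (e : E) : res_ground N := hyp (lift_cells e).

Lemma mem_lifted e c : (enc c \in val (lifted e)) = lift_cells e c.
Proof. by rewrite (mem_hyp _ (c0 := inl None)) ?encK. Qed.

Lemma lifted_inj : injective lifted.
Proof.
move=> e1 e2 eq12; have := mem_lifted e2 (inl (Some e1)).
by rewrite -eq12 mem_lifted /= eqxx => /esym/eqP.
Qed.

(* Lifted hyperplanes contain the marker cell, unlike the links, and a
   second cell besides it, unlike the tags. *)
Lemma lifted_notin e : lifted e \notin kernel_basis.
Proof.
have marker := mem_lifted e (inl None); have label := mem_lifted e (inl (Some e)).
apply/negP => /setUP[] /imsetP[y _ eq_y]; rewrite eq_y in marker label.
  move: marker label; rewrite !(mem_hyp _ (c0 := inl y)) ?encK /tag /= ?eqxx //.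
  by move=> /eqP[<-] /eqP.
by move: marker; rewrite (mem_hyp _ (c0 := inr y)) ?encK /link ?eqxx.
Qed.

Lemma lifted_proj e :
  chi (lifted e) *m proj = \row_j ((w true e j)%:R - (w false e j)%:R).
Proof.
have sum_triple (F : 'I_r * 'I_L.+1 * bool -> rat) :
    \sum_x F x = \sum_j' \sum_(k < L.+1) \sum_s F (j', k, s).
  by rewrite [RHS]pair_big [RHS]pair_big; apply: eq_bigr => -[[]].
rewrite (chi_hyp (c0 := inl None)) //; apply/rowP => j.
rewrite ind_vec_proj big_sumType /= big1 ?add0r => [|t _]; last by rewrite mulr0.
rewrite sum_triple (bigD1 j) //= [X in _ + X]big1 ?addr0; last first.
  by move=> j' /negbTE j'j; apply: big1 => k _; apply: big1 => s _; rewrite j'j mul0r mulr0.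
rewrite (eq_bigr (fun k : 'I_L.+1 => ((k < w true e j)%N)%:R - ((k < w false e j)%N)%:R)).
  by rewrite sumrB !sum_ord_lt ?mxE // leqW.
by move=> k _; rewrite big_bool /= eqxx /sign mul1r mulr1 mulrN1.
Qed.

Variables (v : E -> 'rV[rat]_r) (D : rat).
Hypotheses (D_neq0 : D != 0)
  (w_diff : forall e j, (w true e j)%:R - (w false e j)%:R = D * v e 0 j).

Lemma lifted_free (I : {set E}) :
  lin_indep v I <-> lin_indep (@chi N) (lifted @: I :|: kernel_basis).
Proof.
rewrite /lin_indep (free_lift (P := proj) (D := D) (u := @chi N) (f := lifted) (S := kernel_basis)) //.
- exact: lifted_inj.
- exact: lifted_notin.
- by move=> e; rewrite lifted_proj; apply/rowP => j; rewrite !mxE w_diff.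
- exact: kernel_basis_proj.
- exact: ker_proj_in_span.
- exact: kernel_basis_free.
Qed.
End ResonanceGadget.

Lemma minor_of_lifting (E R : finType) (n : nat) (M : mat E)
    (u : R -> 'rV[rat]_n) (S : {set R}) (f : E -> R) :
  gnd M = setT -> injective f -> (forall e, f e \notin S) -> lin_indep u S ->
  (forall I, ind M I <-> lin_indep u (f @: I :|: S)) ->
  exists Mn, minor_of (vec_matroid u) Mn /\ mat_iso M Mn.
Proof.
move=> gndM f_inj f_notin_S free_S indM.
have lift_out (I : {set E}) : f @: I \subset setT :\: S.
  by apply/subsetP => _ /imsetP[e _ ->]; rewrite !inE f_notin_S.
exists (restr (contr (vec_matroid u) S) (f @: setT)); split.
  apply: minor_restr; last exact: lift_out.
  by apply: minor_contr; [exact: minor_refl | exact: subsetT | exact: free_S].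
exists f; rewrite gndM; split; [by move=> ? ? _ _ /f_inj | split=> // I _].
apply: iff_trans (indM I) _; split=> [freeI|[_ [_ freeI]] //].
by split; [apply: imsetS; exact: subsetT | split].
Qed.

Theorem theorem1p1 (E : finType) (M : mat E) :
  representable_Q M ->
  exists N : nat, (1 <= N)%N /\
    exists Mn : mat (res_ground N),
      minor_of (resonance_matroid N) Mn /\ mat_iso M Mn.
Proof.
move=> [r [v [gndM indM]]].
have [D [L [w [D_neq0 w_diff w_le]]]] := integer_scaling v.
exists #|cell E r L|; split; first by apply/card_gt0P; exists (inl None).
rewrite /resonance_matroid; apply: (minor_of_lifting (f := lifted L w)) => //.
- exact: lifted_inj.
- exact: lifted_notin.
- exact: kernel_basis_free.
- by move=> I; apply: iff_trans (indM I) (lifted_free w_le D_neq0 w_diff I).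
Qed.
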